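(* Let $(\mathcal{C},\Sigma,\rhd)$ be a right triangulated category and let $\mathcal{M}$ be a rigid subcategory of $\mathcal{C}$ (i.e. $\mathrm{Hom}_{\mathcal{C}}(\mathcal{M},\Sigma\mathcal{M})=0$) such that (RC1) the restriction of $\Sigma$ to $\mathcal{M}$ is fully faithful, and (RC2) for any $M_0,M_1\in\mathcal{M}$ and any right triangle $M_0\xrightarrow{f}M_1\xrightarrow{g}X\xrightarrow{h}\Sigma M_0$, the morphism $g$ is a right $\mathcal{M}$-approximation of $X$. Then for any right triangle $M_0\xrightarrow{f}M_1\xrightarrow{g}X\xrightarrow{h}\Sigma M_0$ with $M_0,M_1\in\mathcal{M}$ there is an exact sequence in $\mathrm{Mod}\,\mathcal{M}$ $$\mathrm{Hom}_{\mathcal{M}}(-,M_0)\xrightarrow{\mathrm{Hom}_{\mathcal{M}}(-,f)}\mathrm{Hom}_{\mathcal{M}}(-,M_1)\xrightarrow{\mathrm{Hom}_{\mathcal{C}}(-,g)}\mathrm{Hom}_{\mathcal{C}}(-,X)|_{\mathcal{M}}\to 0.$$ In particular $\mathrm{Hom}_{\mathcal{C}}(-,X)|_{\mathcal{M}}\in\mathrm{mod}\,\mathcal{M}$.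
   Context: Throughout, $k$ is a field and all categories are Hom-finite Krull–Schmidt $k$-linear categories; a subcategory means a full additive subcategory closed under direct summands. A right $\mathcal{M}$-approximation of $X$ is a morphism $g:M_1\to X$ with $M_1\in\mathcal{M}$ such that $\mathrm{Hom}_{\mathcal{C}}(M,M_1)\to\mathrm{Hom}_{\mathcal{C}}(M,X)$ is surjective for all $M\in\mathcal{M}$. $\mathrm{Mod}\,\mathcal{M}$ is the category of contravariant $k$-linear functors $\mathcal{M}\to\mathrm{Mod}\,k$, and $\mathrm{mod}\,\mathcal{M}$ its full subcategory of finitely presented ones (cokernels of morphisms between representable functors $\mathrm{Hom}_{\mathcal{M}}(-,M)$). A right triangulated category is a triple $(\mathcal{C},\Sigma,\rhd)$ with $\mathcal{C}$ additive, $\Sigma:\mathcal{C}\to\mathcal{C}$ an additive functor, and $\rhd$ a class of sequences $U\xrightarrow{u}V\xrightarrow{v}W\xrightarrow{w}\Sigma U$ (right triangles) such that: (RTR0) a sequence isomorphic (via isomorphisms $f,g,h$ on $U,V,W$ and $\Sigma f$ on $\Sigma U$) to a right triangle is a right triangle; (RTR1) $0\to U\xrightarrow{1_U}U\to 0$ is a right triangle for every $U$, and every $u:U\to V$ fits into a right triangle $U\xrightarrow{u}V\xrightarrow{v}W\xrightarrow{w}\Sigma U$; (RTR2) if $U\xrightarrow{u}V\xrightarrow{v}W\xrightarrow{w}\Sigma U$ is a right triangle, so is $V\xrightarrow{v}W\xrightarrow{w}\Sigma U\xrightarrow{-\Sigma u}\Sigma V$; (RTR3) given right triangles $U\xrightarrow{u}V\xrightarrow{v}W\xrightarrow{w}\Sigma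 U$, $U'\xrightarrow{u'}V'\xrightarrow{v'}W'\xrightarrow{w'}\Sigma U'$ and $f:U\to U'$, $g:V\to V'$ with $gu=u'f$, there is $h:W\to W'$ with $hv=v'g$ and $w'h=(\Sigma f)w$; (RTR4) given right triangles $U\xrightarrow{u}V\xrightarrow{v}W\xrightarrow{w}\Sigma U$ and $U'\xrightarrow{u'}U\xrightarrow{v'}W'\xrightarrow{w'}\Sigma U'$, there exist a right triangle $U'\xrightarrow{uu'}V\xrightarrow{p}V'\xrightarrow{q}\Sigma U'$ and a right triangle $W'\xrightarrow{f}V'\xrightarrow{g}W\xrightarrow{(\Sigma v')w}\Sigma W'$ with $fv'=pu$, $qf=w'$, $gp=v$. *)

From HB Require Import structures.
From mathcomp Require Import all_boot all_order all_algebra.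
Set Implicit Arguments. Unset Strict Implicit. Unset Printing Implicit Defensive.
Import GRing.Theory.
Local Open Scope ring_scope.

(* A Mor-finite k-linear category: Mor spaces are finite-dimensional
   k-vector spaces (vectType k) and composition is k-bilinear. *)
Record KCat (k : fieldType) := {
  Obj :> Type;
  Mor : Obj -> Obj -> vectType k;
  mcomp : forall X Y Z : Obj, Mor Y Z -> Mor X Y -> Mor X Z;
  idm : forall X : Obj, Mor X X;
  compA : forall (W X Y Z : Obj) (h : Mor Y Z) (g : Mor X Y) (f : Mor W X),
      mcomp h (mcomp g f) = mcomp (mcomp h g) f;
  comp1m : forall (X Y : Obj) (f : Mor X Y), mcomp (idm Y) f = f;
  compm1 : forall (X Y : Obj) (f : Mor X Y), mcomp f (idm X) = f;
  comp_linl : forall (X Y Z : Obj) (a : k) (g g' : Mor Y Z) (f : Mor X Y),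
      mcomp (a *: g + g') f = a *: mcomp g f + mcomp g' f;
  comp_linr : forall (X Y Z : Obj) (a : k) (g : Mor Y Z) (f f' : Mor X Y),
      mcomp g (a *: f + f') = a *: mcomp g f + mcomp g f'
}.

Arguments Mor {k} C X Y : rename.
Arguments mcomp {k C X Y Z} g f : rename.
Arguments idm {k C} X : rename.

Section Defs.
Variables (k : fieldType) (C : KCat k).

Definition is_iso (X Y : C) (f : Mor C X Y) : Prop :=
  exists g : Mor C Y X, mcomp g f = idm X /\ mcomp f g = idm Y.

Definition is_zero_obj (Z : C) : Prop := idm Z = 0.

Definition is_biproduct (X Y S : C) (i1 : Mor C X S) (i2 : Mor C Y S)
  (p1 : Mor C S X) (p2 : Mor C S Y) : Prop :=
  [/\ mcomp p1 i1 = idm X, mcomp p2 i2 = idm Y, mcomp p2 i1 = 0,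
      mcomp p1 i2 = 0 & mcomp i1 p1 + mcomp i2 p2 = idm S].

Definition additive_cat : Prop :=
  (exists Z : C, is_zero_obj Z) /\
  forall X Y : C, exists (S : C) i1 i2 p1 p2, @is_biproduct X Y S i1 i2 p1 p2.

Definition local_end (X : C) : Prop :=
  idm X <> 0 /\
  forall f : Mor C X X, is_iso f \/ is_iso (idm X - f).

Definition krull_schmidt : Prop :=
  forall X : C, exists (n : nat) (Y : 'I_n -> C)
    (i : forall j, Mor C (Y j) X) (p : forall j, Mor C X (Y j)),
    [/\ forall j, mcomp (p j) (i j) = idm (Y j),
        forall j l, j != l -> mcomp (p l) (i j) = 0,
        \sum_(j < n) mcomp (i j) (p j) = idm X
      & forall j, local_end (Y j)].

(* full additive subcategory closed under direct summands, given by its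
   objects *)
Definition add_subcat (M : C -> Prop) : Prop :=
  [/\ exists Z : C, is_zero_obj Z /\ M Z,
      forall (X Y S : C) i1 i2 p1 p2, @is_biproduct X Y S i1 i2 p1 p2 ->
        M X -> M Y -> M S
    & forall (X Y S : C) i1 i2 p1 p2, @is_biproduct X Y S i1 i2 p1 p2 ->
        M S -> M X].

Variables (Sig : C -> C) (SigM : forall X Y : C, Mor C X Y -> Mor C (Sig X) (Sig Y)).
Arguments SigM {X Y}.

Definition additive_functor : Prop :=
  [/\ forall X : C, SigM (idm X) = idm (Sig X),
      forall (X Y Z : C) (g : Mor C Y Z) (f : Mor C X Y),
        SigM (mcomp g f) = mcomp (SigM g) (SigM f)
    & forall (X Y : C) (f g : Mor C X Y), SigM (f + g) = SigM f + SigM g].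

(* class of right triangles U -u-> V -v-> W -w-> Sig U *)
Variable rt : forall U V W : C,
  Mor C U V -> Mor C V W -> Mor C W (Sig U) -> Prop.
Arguments rt {U V W}.

Definition RTR0 : Prop :=
  forall (U V W U' V' W' : C) (u : Mor C U V) (v : Mor C V W) (w : Mor C W (Sig U))
    (u' : Mor C U' V') (v' : Mor C V' W') (w' : Mor C W' (Sig U'))
    (f : Mor C U U') (g : Mor C V V') (h : Mor C W W'),
    rt u v w -> is_iso f -> is_iso g -> is_iso h ->
    mcomp g u = mcomp u' f -> mcomp h v = mcomp v' g -> mcomp w' h = mcomp (SigM f) w ->
    rt u' v' w'.

Definition RTR1 : Prop :=
  (forall (U Z : C), is_zero_obj Z ->
     rt (idm U) (0 : Mor C U Z) (0 : Mor C Z (Sig U))) /\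
  (forall (U V : C) (u : Mor C U V), exists (W : C) (v : Mor C V W) (w : Mor C W (Sig U)),
     rt u v w).

Definition RTR2 : Prop :=
  forall (U V W : C) (u : Mor C U V) (v : Mor C V W) (w : Mor C W (Sig U)),
    rt u v w -> rt v w (- SigM u).

Definition RTR3 : Prop :=
  forall (U V W U' V' W' : C) (u : Mor C U V) (v : Mor C V W) (w : Mor C W (Sig U))
    (u' : Mor C U' V') (v' : Mor C V' W') (w' : Mor C W' (Sig U'))
    (f : Mor C U U') (g : Mor C V V'),
    rt u v w -> rt u' v' w' -> mcomp g u = mcomp u' f ->
    exists h : Mor C W W', mcomp h v = mcomp v' g /\ mcomp w' h = mcomp (SigM f) w.

Definition RTR4 : Prop :=
  forall (U V W U' W' : C) (u : Mor C U V) (v : Mor C V W) (w : Mor C W (Sig U))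
    (u' : Mor C U' U) (v' : Mor C U W') (w' : Mor C W' (Sig U')),
    rt u v w -> rt u' v' w' ->
    exists (V' : C) (p : Mor C V V') (q : Mor C V' (Sig U'))
           (f : Mor C W' V') (g : Mor C V' W),
      [/\ rt (mcomp u u') p q, rt f g (mcomp (SigM v') w),
          mcomp f v' = mcomp p u, mcomp q f = w' & mcomp g p = v].

Definition right_triangulated : Prop :=
  [/\ additive_functor, RTR0, RTR1, RTR2 & RTR3 /\ RTR4].

Definition rigid (M : C -> Prop) : Prop :=
  forall (X Y : C), M X -> M Y -> forall f : Mor C X (Sig Y), f = 0.

Definition right_approx (M : C -> Prop) (M1 X : C) (g : Mor C M1 X) : Prop :=
  M M1 /\ forall (N : C), M N -> forall x : Mor C N X,
    exists y : Mor C N M1, mcomp g y = x.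

Definition RC1 (M : C -> Prop) : Prop :=
  forall X Y : C, M X -> M Y -> bijective (@SigM X Y).

Definition RC2 (M : C -> Prop) : Prop :=
  forall (M0 M1 X : C) (f : Mor C M0 M1) (g : Mor C M1 X) (h : Mor C X (Sig M0)),
    M M0 -> M M1 -> rt f g h -> right_approx M g.

End Defs.

From Pilot Require Import Defs.
From HB Require Import structures.
From mathcomp Require Import all_boot all_order all_algebra.
Local Open Scope ring_scope.
Import GRing.Theory.

(* Comparing the right triangle M0 -> M1 -> X -> ΣM0 with the trivial one
   M0 -1-> M0 -> 0 -> ΣM0 shows g f = 0, so the image of Hom(-, f) lies in
   the kernel of Hom(-, g).  Conversely, if g y = 0 for y : N -> M1, the
   rotations of N -1-> N -> 0 -> ΣN and of the given triangle are related by
   the pair (y, 0), and (RTR3) yields φ : ΣN -> ΣM0 with Σf φ = Σy; as Σ is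
   fully faithful on M, φ = Σz with f z = y.  Surjectivity of Hom(-, g) on M
   is exactly (RC2). *)

Section KCatTheory.
Variables (k : fieldType) (C : KCat k).

Lemma mcomp0l (X Y Z : C) (f : Mor C X Y) : mcomp (0 : Mor C Y Z) f = 0.
Proof.
by have := comp_linl (-1) (0 : Mor C Y Z) 0 f; rewrite !scaleNr !scale1r !addNr.
Qed.

Lemma mcomp0r (X Y Z : C) (g : Mor C Y Z) : mcomp g (0 : Mor C X Y) = 0.
Proof.
by have := comp_linr (-1) g (0 : Mor C X Y) 0; rewrite !scaleNr !scale1r !addNr.
Qed.

Lemma mcompNl (X Y Z : C) (g : Mor C Y Z) (f : Mor C X Y) :
  mcomp (- g) f = - mcomp g f.
Proof.
by have := comp_linl (-1) g 0 f; rewrite !scaleNr !scale1r mcomp0l !addr0.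
Qed.

Lemma mcompNr (X Y Z : C) (g : Mor C Y Z) (f : Mor C X Y) :
  mcomp g (- f) = - mcomp g f.
Proof.
by have := comp_linr (-1) g f 0; rewrite !scaleNr !scale1r mcomp0r !addr0.
Qed.

End KCatTheory.

Section RightTriangles.
Context {k : fieldType} {C : KCat k} {Sig : C -> C}.
Context {SigM : forall X Y : C, Mor C X Y -> Mor C (Sig X) (Sig Y)}.
Context {rt : forall U V W : C, Mor C U V -> Mor C V W -> Mor C W (Sig U) -> Prop}.
Arguments SigM {X Y}.
Arguments rt {U V W}.

Context {Z : C}.
Hypothesis Z0 : is_zero_obj Z.
Hypothesis rtr1 : RTR1 (@rt).
Hypothesis rtr2 : RTR2 (@SigM) (@rt).
Hypothesis rtr3 : RTR3 (@SigM) (@rt).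

Lemma rt_comp0 {U V W : C} {u : Mor C U V} {v : Mor C V W} {w : Mor C W (Sig U)} :
  rt u v w -> mcomp v u = 0.
Proof.
move=> Tuvw; have Tid := rtr1.1 U Z Z0.
have [phi [phi0 _]] := rtr3 _ _ _ _ _ _ _ _ _ _ _ _ (idm U) u Tid Tuvw erefl.
by rewrite -phi0 mcomp0r.
Qed.

Hypothesis SigM1 : forall X : C, SigM (idm X) = idm (Sig X).

Lemma rt_Sig_factor {N U V W : C} {u : Mor C U V} {v : Mor C V W}
    {w : Mor C W (Sig U)} {y : Mor C N V} :
  rt u v w -> mcomp v y = 0 ->
  exists phi : Mor C (Sig N) (Sig U), mcomp (SigM u) phi = SigM y.
Proof.
move=> Tuvw vy0.
have Tid := rtr2 _ _ _ _ _ _ (rtr1.1 N Z Z0).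
have Trot := rtr2 _ _ _ _ _ _ Tuvw.
have sq : mcomp (0 : Mor C Z W) (0 : Mor C N Z) = mcomp v y by rewrite mcomp0l.
have [phi [_ phiE]] := rtr3 _ _ _ _ _ _ _ _ _ _ _ _ y 0 Tid Trot sq.
exists phi; apply: oppr_inj.
by rewrite -mcompNl phiE mcompNr SigM1 compm1.
Qed.

End RightTriangles.

Theorem lemma3p7 (k : fieldType) (C : KCat k)
  (Sig : C -> C) (SigM : forall X Y : C, Mor C X Y -> Mor C (Sig X) (Sig Y))
  (rt : forall U V W : C, Mor C U V -> Mor C V W -> Mor C W (Sig U) -> Prop)
  (M : C -> Prop) :
  additive_cat C -> krull_schmidt C ->
  right_triangulated SigM rt ->
  add_subcat M -> rigid Sig M ->
  RC1 SigM M -> RC2 rt M ->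
  forall (M0 M1 X : C) (f : Mor C M0 M1) (g : Mor C M1 X) (h : Mor C X (Sig M0)),
    M M0 -> M M1 -> rt M0 M1 X f g h ->
    (* exactness, evaluated at every object N of M, of
       Hom_M(-,M0) -> Hom_M(-,M1) -> Hom_C(-,X)|_M -> 0 *)
    forall N : C, M N ->
      (forall x : Mor C N X, exists y : Mor C N M1, mcomp g y = x) /\
      (forall y : Mor C N M1,
         mcomp g y = 0 <-> exists z : Mor C N M0, mcomp f z = y).
Proof.
move=> [[Z Z0] _] _ [[SigM1 SigMM _] _ rtr1 rtr2 [rtr3 _]] _ _ rc1 rc2
  M0 M1 X f g h MM0 MM1 Tfgh N MN.
split=> [|y]; first exact: (rc2 _ _ _ _ _ _ MM0 MM1 Tfgh).2.
split=> [gy0 | [z <-]]; last first.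
  by rewrite Defs.compA (rt_comp0 Z0 rtr1 rtr3 Tfgh) mcomp0l.
have [phi phiE] := rt_Sig_factor Z0 rtr1 rtr2 rtr3 SigM1 Tfgh gy0.
have [SigM_inv _ SigM_invK] := rc1 N M0 MN MM0.
have /bij_inj SigM_inj := rc1 N M1 MN MM1.
exists (SigM_inv phi); apply: SigM_inj.
by rewrite SigMM SigM_invK.
Qed.
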